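(* Suppose $P=P_{(a,b)}$ is a point of $\mathcal X_3$ such that $\alpha(P)^2-\alpha(P)+1=0$. Then for every positive integer $i$ with $i\le m-2$ there exists a function $g_i\in L((3i+3)D_\infty)$ with $v_P(g_i)=3i+2$.
   Context: Let $q$ be a prime power with $q\equiv2\pmod3$, $m=(q+1)/3$, and let $\mathcal X_3$ be the nonsingular projective model (defined over $\mathbb F_{q^2}$) of the plane curve $y^{q+1}+x^{2m}+x^m=0$. Let $P_\infty^1,\dots,P_\infty^m$ be the $m$ points of $\mathcal X_3$ lying over the point at infinity (poles of $x$), $D_\infty=\sum_jP_\infty^j$, and $L(D)$ the Riemann–Roch space of $D$. Points not centered at $(0,0)$ or at infinity have affine coordinates $(a,b)$, $a\ne0$, and are denoted $P_{(a,b)}$; for such points with $a^m\neq -1$, $\alpha(P_{(a,b)})=a^m/(1+a^m)$. $v_P$ is the valuation at $P$. *)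

From HB Require Import structures.
From mathcomp Require Import all_boot all_order all_algebra all_field.
Set Implicit Arguments. Unset Strict Implicit. Unset Printing Implicit Defensive.
Import Order.TTheory GRing.Theory Num.Theory.
Local Open Scope ring_scope.

(* Evaluation of a bivariate polynomial A(X,Y) in {poly {poly K}}
   (outer variable = Y, inner = X) at (x,y) in a field F over K. *)
Definition eval2 (K F : fieldType) (iota : {rmorphism K -> F}) (x y : F)
  (A : {poly {poly K}}) : F :=
  (map_poly (fun c : {poly K} => (map_poly iota c).[x]) A).[y].

(* F = K(x,y) is the function field of the curve y^(q+1) + x^(2m) + x^m = 0:
   x is transcendental over K, (x,y) satisfies the equation, and F is
   generated over K by x and y. *)
Definition curve_function_field (K F : fieldType) (iota : {rmorphism K -> F})
  (x y : F) (q m : nat) : Prop :=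
  [/\ forall P : {poly K}, P != 0 -> (map_poly iota P).[x] != 0,
      y ^+ q.+1 + x ^+ (2 * m) + x ^+ m = 0
    & forall g : F, exists A B : {poly {poly K}},
        eval2 iota x y B != 0 /\ g = eval2 iota x y A / eval2 iota x y B].

(* A place (point of the nonsingular model) of F/K, given by its normalized
   discrete valuation v : F -> Z, trivial on K (the value at 0 is irrelevant;
   v(0) = +oo by convention and is never used). *)
Definition is_place (K F : fieldType) (iota : {rmorphism K -> F})
  (v : F -> int) : Prop :=
  [/\ forall a b : F, a != 0 -> b != 0 -> v (a * b) = v a + v b,
      forall a b : F, a != 0 -> b != 0 -> a + b != 0 ->
        Num.min (v a) (v b) <= v (a + b),
      forall c : K, c != 0 -> v (iota c) = 0
    & exists t : F, t != 0 /\ v t = 1].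

(* g in L(k D_oo), where D_oo is the sum of the places that are poles of x. *)
Definition in_L_kDinf (K F : fieldType) (iota : {rmorphism K -> F}) (x : F)
  (k : nat) (g : F) : Prop :=
  g = 0 \/
  forall w : F -> int, is_place iota w ->
    (if w x < 0 then - (k%:Z) <= w g else 0 <= w g).

From HB Require Import structures.
From mathcomp Require Import all_boot all_order all_algebra all_field.
From mathcomp Require Import zify ring.
Set Implicit Arguments. Unset Strict Implicit. Unset Printing Implicit Defensive.
Import Order.TTheory GRing.Theory Num.Theory.
Local Open Scope ring_scope.

(* Write r = x^m and u = a^m, a primitive cube root of unity.  The function
   (r - u)^N (r^2 + r + 1) = (r - u)^(N+1) (r - u^2) vanishes to order N + 1 at P,
   and the identity r^k (r^2 + r + 1) = Epow k (r^3) (r^2 + r) writes it as a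
   polynomial gfun N u in r^3 and r^2 + r of weighted degree N + 2 (weights 3, 2).
   Near P, Frobenius makes r^3 = x x^q agree with a^q x and r^2 + r = - y^(q+1) agree
   with - b^q y up to order q > 3i + 2, so g = gfun N u (a^q x) (- b^q y), N = 3i + 1,
   still vanishes to order exactly 3i + 2; its only poles lie over infinity, where x and
   y have pole orders 3 and 2, so these poles have order at most N + 2 = 3i + 3.
   The local facts v_P(x - a) = 1 and v(x) = -3, v(y) = -2 at the poles of x come from a
   Newton iteration: y (resp. y^3/x^2) is the fixed point of a map that contracts thanks
   to Frobenius, so every function is a quotient of limits of rational functions in
   x - a (resp. y/x), whose valuations are multiples of that of x - a (resp. y/x). *)

(** * Cube roots of unity and the polynomials [gfun] *)

Lemma alpha_cube (K : fieldType) (u : K) : 1 + u != 0 ->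
  (u / (1 + u)) ^+ 2 - u / (1 + u) + 1 = 0 -> u ^+ 2 + u + 1 = 0.
Proof. by move=> u1 /(congr1 (fun z => z * (1 + u) ^+ 2)); rewrite mul0r => <-; field. Qed.

Lemma cube_root_sub_sqr (R : comPzRingType) (u : R) :
  u ^+ 2 + u + 1 = 0 -> (u - u ^+ 2) ^+ 2 = - 3%:R.
Proof.
move=> u3; have -> : (u - u ^+ 2) ^+ 2 = (u ^+ 2 + u + 1) * (u ^+ 2 - 3%:R * u + 3%:R) - 3%:R.
  by ring.
by rewrite u3 mul0r sub0r.
Qed.

Definition Epow (R : comPzRingType) (k : nat) (X Y : R) : R :=
  X ^+ (k %/ 3) * match (k %% 3)%N with 0 => Y + 1 | 1 => X + Y | _ => Y ^+ 2 - X end.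

Lemma Epow_id (R : comPzRingType) (r : R) k :
  Epow k (r ^+ 3) (r ^+ 2 + r) = (r ^+ 2 + r + 1) * r ^+ k.
Proof.
rewrite /Epow {3}(divn_eq k 3) exprD mulnC exprM.
by case: (k %% 3)%N (ltn_pmod k (isT : 0 < 3)%N) => [|[|[|j]]] //= _; ring.
Qed.

Definition gfun (R : comPzRingType) (N : nat) (u X Y : R) : R :=
  \sum_(k < N.+1) ((- u) ^+ (N - k) *+ 'C(N, k)) * Epow k X Y.

Lemma gfun_id (R : comPzRingType) N (u r : R) :
  gfun N u (r ^+ 3) (r ^+ 2 + r) = (r - u) ^+ N * (r ^+ 2 + r + 1).
Proof.
rewrite /gfun [r - u]addrC exprDn mulr_suml; apply: eq_bigr => k _.
by rewrite Epow_id -!mulrnAl; ring.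
Qed.

(** * Valuations *)

Definition val_ge (F : fieldType) (w : F -> int) (f : F) (N : int) : Prop :=
  f = 0 \/ N <= w f.

Section Place.
Variables (K F : fieldType) (iota : {rmorphism K -> F}) (w : F -> int).
Hypothesis w_place : is_place iota w.

Lemma vM f g : f != 0 -> g != 0 -> w (f * g) = w f + w g.
Proof. by case: w_place => + _ _ _; apply. Qed.

Lemma vD_ge_min f g : f != 0 -> g != 0 -> f + g != 0 ->
  Num.min (w f) (w g) <= w (f + g).
Proof. by case: w_place => _ + _ _; apply. Qed.

Lemma v_iota c : c != 0 -> w (iota c) = 0.
Proof. by case: w_place => _ _ + _; apply. Qed.

Lemma v1 : w 1 = 0.
Proof. by rewrite -(rmorph1 iota) v_iota ?oner_neq0. Qed.

Lemma vN f : f != 0 -> w (- f) = w f.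
Proof.
move=> f0; rewrite -mulN1r -(rmorphN1 iota) vM ?fmorph_eq0 ?oppr_eq0 ?oner_eq0 //.
by rewrite v_iota ?add0r // oppr_eq0 oner_eq0.
Qed.

Lemma vV f : f != 0 -> w f^-1 = - w f.
Proof.
move=> f0; apply/eqP; rewrite -addr_eq0 addrC -vM ?invr_eq0 //.
by rewrite mulfV // v1.
Qed.

Lemma vX f k : f != 0 -> w (f ^+ k) = k%:Z * w f.
Proof.
move=> f0; elim: k => [|k IHk]; first by rewrite expr0 v1 mul0r.
by rewrite exprS vM ?expf_neq0 // IHk -add1n PoszD mulrDl mul1r.
Qed.

Lemma val_ge_le f M N : val_ge w f N -> M <= N -> val_ge w f M.
Proof. by case=> [->|fN] MN; [left | right; apply: le_trans fN]. Qed.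

Lemma val_geP f N : f != 0 -> val_ge w f N -> N <= w f.
Proof. by move=> /negPf f0 [/eqP|//]; rewrite f0. Qed.

Lemma val_ge0 N : val_ge w 0 N.
Proof. by left. Qed.

Lemma val_ge1 : val_ge w 1 0.
Proof. by right; rewrite v1. Qed.

Lemma val_ge_iota c : val_ge w (iota c) 0.
Proof.
have [->|c0] := eqVneq c 0; first by rewrite rmorph0; left.
by right; rewrite v_iota.
Qed.

Lemma val_geN f N : val_ge w f N -> val_ge w (- f) N.
Proof.
have [->|f0] := eqVneq f 0; first by rewrite oppr0; left.
by case=> [/eqP|fN]; [rewrite (negPf f0) | right; rewrite vN].
Qed.

Lemma val_geD f g N : val_ge w f N -> val_ge w g N -> val_ge w (f + g) N.
Proof.
have [->|f0] := eqVneq f 0; first by rewrite add0r.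
have [->|g0] := eqVneq g 0; first by rewrite addr0.
have [->|fg0] := eqVneq (f + g) 0; first by left.
move=> /(val_geP f0) fN /(val_geP g0) gN; right.
by apply: le_trans (vD_ge_min f0 g0 fg0); rewrite le_min fN gN.
Qed.

Lemma val_geB f g N : val_ge w f N -> val_ge w g N -> val_ge w (f - g) N.
Proof. by move=> fN gN; apply/val_geD/val_geN. Qed.

Lemma val_geM f g M N : val_ge w f M -> val_ge w g N -> val_ge w (f * g) (M + N).
Proof.
have [->|f0] := eqVneq f 0; first by rewrite mul0r; left.
have [->|g0] := eqVneq g 0; first by rewrite mulr0; left.
move=> /(val_geP f0) fM /(val_geP g0) gN.
by right; rewrite vM // lerD.
Qed.

Lemma val_geMl f g N : val_ge w f 0 -> val_ge w g N -> val_ge w (f * g) N.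
Proof. by move=> f0 gN; have := val_geM f0 gN; rewrite add0r. Qed.

Lemma val_geMr f g N : val_ge w f N -> val_ge w g 0 -> val_ge w (f * g) N.
Proof. by move=> fN g0; have := val_geM fN g0; rewrite addr0. Qed.

Lemma val_geX f N k : val_ge w f N -> val_ge w (f ^+ k) (k%:Z * N).
Proof.
move=> fN; elim: k => [|k IHk]; first by rewrite expr0 mul0r; apply: val_ge1.
by rewrite exprS -add1n PoszD mulrDl mul1r; apply: val_geM.
Qed.

Lemma val_geX0 f k : val_ge w f 0 -> val_ge w (f ^+ k) 0.
Proof. by move=> f0; have := val_geX k f0; rewrite mulr0. Qed.

Lemma val_geMn f N k : val_ge w f N -> val_ge w (f *+ k) N.
Proof.
move=> fN; elim: k => [|k IHk]; first by rewrite mulr0n; left.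
by rewrite mulrS; apply: val_geD.
Qed.

Lemma val_ge_sum (I : Type) (r : seq I) (P : pred I) (E : I -> F) N :
  (forall i, P i -> val_ge w (E i) N) -> val_ge w (\sum_(i <- r | P i) E i) N.
Proof.
move=> EN; apply: (big_ind (val_ge w ^~ N)) => //; first exact: val_ge0.
by move=> f g; apply: (val_geD (f := f) (g := g)).
Qed.

Lemma val_ge_inv f : f != 0 -> w f = 0 -> val_ge w f^-1 0.
Proof. by move=> f0 wf; right; rewrite vV // wf oppr0. Qed.

Lemma val_ge_iota1 c : val_ge w (iota c) 1 -> c = 0.
Proof.
have [//|c0] := eqVneq c 0.
by case=> [/eqP|]; [rewrite fmorph_eq0 (negPf c0) | rewrite v_iota].
Qed.

Lemma val_ge_subV f g N : f != 0 -> g != 0 -> w f = 0 -> w g = 0 ->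
  val_ge w (f - g) N -> val_ge w (f^-1 - g^-1) N.
Proof.
move=> f0 g0 wf wg fgN; have -> : f^-1 - g^-1 = - (f - g) * (f * g)^-1 by field; apply/andP.
by apply/val_geMr/val_ge_inv; rewrite ?mulf_neq0 ?vM ?wf ?wg //; apply: val_geN.
Qed.

Lemma vD_eq f g : f != 0 -> val_ge w g (w f + 1) ->
  f + g != 0 /\ w (f + g) = w f.
Proof.
move=> f0; have [->|g0 /(val_geP g0) wg] := eqVneq g 0; first by rewrite addr0.
have fg0 : f + g != 0.
  apply: contraTneq wg => /eqP; rewrite addr_eq0 => /eqP->.
  by rewrite vN // -ltNge ltrDl.
split=> //; have := vD_ge_min f0 g0 fg0.
have := @vD_ge_min (f + g) (- g) fg0.
rewrite oppr_eq0 g0 addrK vN // => /(_ isT f0).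
by rewrite !ge_min => /orP[] h1 /orP[] h2; lia.
Qed.

Lemma vD_eq_unit f g (k : nat) : f != 0 -> w f = 0 -> val_ge w (f - g) k%:Z ->
  (0 < k)%N -> g != 0 /\ w g = 0.
Proof.
move=> f0 wf fgk k0; have fgk' : val_ge w (- (f - g)) (w f + 1).
  by apply/val_geN/(val_ge_le fgk); rewrite wf add0r lez_nat.
by have := vD_eq f0 fgk'; rewrite opprB subrKC wf.
Qed.

Lemma val_ge_subX f g N k : val_ge w f 0 -> val_ge w g 0 -> val_ge w (f - g) N ->
  val_ge w (f ^+ k - g ^+ k) N.
Proof.
move=> f0 g0 fgN; elim: k => [|k IHk]; first by rewrite !expr0 subrr; left.
have -> : f ^+ k.+1 - g ^+ k.+1 = f * (f ^+ k - g ^+ k) + (f - g) * g ^+ k.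
  by rewrite !exprS; ring.
by apply: val_geD; [apply: val_geMl | apply/val_geMr/val_geX0].
Qed.

Lemma val_ge_subM f1 f2 g1 g2 N : val_ge w f1 0 -> val_ge w g2 0 ->
  val_ge w (f1 - f2) N -> val_ge w (g1 - g2) N -> val_ge w (f1 * g1 - f2 * g2) N.
Proof.
move=> f10 g20 fN gN.
have -> : f1 * g1 - f2 * g2 = f1 * (g1 - g2) + (f1 - f2) * g2 by ring.
by apply: val_geD; [apply: val_geMl | apply: val_geMr].
Qed.

Lemma val_ge_subXp p f g N n : p \in [pchar F] -> val_ge w (f - g) N ->
  val_ge w (f ^+ (p ^ n) - g ^+ (p ^ n)) ((p ^ n)%N%:Z * N).
Proof.
move=> pF fgN; suff -> : f ^+ (p ^ n) - g ^+ (p ^ n) = (f - g) ^+ (p ^ n).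
  exact: val_geX.
rewrite -[f in LHS](subrK g) exprDn_pchar ?addrK //.
by rewrite (eq_pnat _ (pcharf_eq pF)) pnatX pnat_id // (pcharf_prime pF).
Qed.

(** * Approximation by rational functions *)

Lemma iota_comm z : commr_rmorph iota z.
Proof. by move=> c; apply: mulrC. Qed.

Local Notation hz z := (horner_morph (iota_comm z)).

Definition rational_in (z s : F) : Prop :=
  exists A B : {poly K}, hz z B != 0 /\ s = hz z A / hz z B.

Lemma rational_in_horner z A : rational_in z (hz z A).
Proof. by exists A, 1; rewrite rmorph1 oner_neq0 divr1. Qed.

Lemma rational_in_iota z c : rational_in z (iota c).
Proof. by rewrite -(horner_morphC (iota_comm z)); apply: rational_in_horner. Qed.

Lemma rational_in_self z : rational_in z z.
Proof.
by rewrite -[z in rational_in _ z](horner_morphX (iota_comm z)); apply: rational_in_horner.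
Qed.

Lemma rational_inD z s t : rational_in z s -> rational_in z t -> rational_in z (s + t).
Proof.
move=> [A1 [B1 [B10 ->]]] [A2 [B2 [B20 ->]]].
exists (A1 * B2 + A2 * B1), (B1 * B2); rewrite !rmorphD !rmorphM /= mulf_neq0 //.
by split=> //; field; apply/andP.
Qed.

Lemma rational_inN z s : rational_in z s -> rational_in z (- s).
Proof. by move=> [A [B [B0 ->]]]; exists (- A), B; rewrite rmorphN mulNr. Qed.

Lemma rational_inM z s t : rational_in z s -> rational_in z t -> rational_in z (s * t).
Proof.
move=> [A1 [B1 [B10 ->]]] [A2 [B2 [B20 ->]]].
exists (A1 * A2), (B1 * B2); rewrite !rmorphM /= mulf_neq0 //.
by split=> //; field; apply/andP.
Qed.

Lemma rational_inV z s : rational_in z s -> rational_in z s^-1.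
Proof.
move=> [A [B [B0 ->]]]; have [A0|A0] := eqVneq (hz z A) 0.
  by rewrite A0 mul0r invr0 -(rmorph0 iota); apply: rational_in_iota.
by exists B, A; rewrite invfM invrK mulrC.
Qed.

Lemma rational_inX z s k : rational_in z s -> rational_in z (s ^+ k).
Proof.
move=> zs; elim: k => [|k IHk]; last by rewrite exprS; apply: rational_inM.
by rewrite expr0 -(rmorph1 iota); apply: rational_in_iota.
Qed.

Definition approximable (z f : F) : Prop :=
  forall N : nat, exists s, rational_in z s /\ val_ge w (f - s) N%:Z.

Lemma approximable_rational z s : rational_in z s -> approximable z s.
Proof. by move=> zs N; exists s; rewrite subrr; split=> //; left. Qed.

Lemma approximable_iota z c : approximable z (iota c).
Proof. exact/approximable_rational/rational_in_iota. Qed.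

Lemma approximable_self z : approximable z z.
Proof. exact/approximable_rational/rational_in_self. Qed.

Lemma approximableD z f g : approximable z f -> approximable z g -> approximable z (f + g).
Proof.
move=> zf zg N; have [s [zs fs]] := zf N; have [t [zt gt]] := zg N.
exists (s + t); split; first exact: rational_inD.
by rewrite opprD addrACA; apply: val_geD.
Qed.

Lemma approximableM z f g : val_ge w f 0 -> val_ge w g 0 ->
  approximable z f -> approximable z g -> approximable z (f * g).
Proof.
move=> f0 g0 zf zg N; have [s [zs fs]] := zf N; have [t [zt gt]] := zg N.
exists (s * t); split; first exact: rational_inM.
apply: val_ge_subM => //; rewrite -[t](subKr g).
by apply: val_geB => //; apply: val_ge_le gt _.
Qed.

Lemma approximableX z f k : val_ge w f 0 -> approximable z f -> approximable z (f ^+ k).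
Proof.
move=> f0 zf; elim: k => [|k IHk]; first by rewrite expr0 -(rmorph1 iota); apply: approximable_iota.
by rewrite exprS; apply: approximableM => //; apply: val_geX0.
Qed.

Lemma approximableV z f : f != 0 -> w f = 0 -> approximable z f -> approximable z f^-1.
Proof.
move=> f0 wf zf N; have [s [zs fs]] := zf N.+1.
have [s0 ws] := vD_eq_unit f0 wf fs (ltn0Sn N).
exists s^-1; split; first exact: rational_inV.
by apply: val_ge_subV => //; apply: val_ge_le fs _; rewrite lez_nat.
Qed.

Lemma approximable_iter z f (Phi : F -> F) :
  (exists s, rational_in z s /\ val_ge w (f - s) 1) ->
  (forall s (k : nat), rational_in z s -> val_ge w (f - s) k%:Z -> (0 < k)%N ->
     rational_in z (Phi s) /\ val_ge w (f - Phi s) k.+1%:Z) ->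
  approximable z f.
Proof.
move=> [s0 s0_1] step.
suff approxS N : exists s, rational_in z s /\ val_ge w (f - s) N.+1%:Z.
  move=> N; have [s [zs fs]] := approxS N; exists s; split=> //.
  by apply: val_ge_le fs _; rewrite lez_nat.
elim: N => [|N [s [zs fs]]]; first by exists s0.
by exists (Phi s); apply: step.
Qed.

Lemma val_ge_prod1 (r : seq F) : (forall f, f \in r -> val_ge w f 0) ->
  val_ge w (\prod_(f <- r) f) 1 -> exists2 f, f \in r & val_ge w f 1.
Proof.
elim: r => [|f r IHr] r_int; first by rewrite big_nil => /(val_geP (oner_neq0 _)); rewrite v1.
rewrite big_cons => fr1; have [f0|f0] := eqVneq f 0; first by exists f; [rewrite mem_head | left].
have /(val_geP f0) := r_int f (mem_head _ _); rewrite le_eqVlt => /orP[/eqP wf0|]; last first.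
  by exists f; [rewrite mem_head | right].
have [||g gr g1] := IHr; last by exists g; rewrite // in_cons gr orbT.
  by move=> g gr; apply: r_int; rewrite in_cons gr orbT.
have [->|r0] := eqVneq (\prod_(g <- r) g) 0; first by left.
by right; move: fr1 => /(val_geP (mulf_neq0 f0 r0)); rewrite vM // -wf0 add0r.
Qed.

Lemma v_subX z c k : val_ge w z 0 -> 0 < w (z - iota c) -> z - iota c != 0 ->
  c != 0 -> (k%:R : K) != 0 ->
  z ^+ k - iota c ^+ k != 0 /\ w (z ^+ k - iota c ^+ k) = w (z - iota c).
Proof.
move=> z_int zc zc0 c0 k0; have k_gt0 : (0 < k)%N by case: k k0 => //; rewrite eqxx.
pose C := c ^+ k.-1 *+ k.
have C0 : iota C != 0 by rewrite fmorph_eq0 /C -mulr_natl mulf_neq0 ?expf_neq0.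
have wC : w (iota C) = 0 by rewrite v_iota // -(fmorph_eq0 iota).
have C_sum : iota C = \sum_(i < k) iota c ^+ (k.-1 - i) * iota c ^+ i.
  rewrite /C rmorphMn rmorphXn -[e in _ *+ e]card_ord -sumr_const; apply: eq_bigr => i _.
  by rewrite -exprD subnK //; have := ltn_ord i; lia.
have sum_near : val_ge w (- iota C + \sum_(i < k) z ^+ (k.-1 - i) * iota c ^+ i)
    (w (iota C) + 1).
  rewrite wC add0r C_sum addrC -sumrB; apply: val_ge_sum => i _.
  rewrite -mulrBl; apply: val_geMr; last exact/val_geX0/val_ge_iota.
  by apply: val_ge_subX => //; [apply: val_ge_iota | right].
have [S0 wS] := vD_eq C0 sum_near; rewrite addNKr wC in S0 wS.
by rewrite subrXX mulf_neq0 // vM // wS addr0.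
Qed.

Section Uniformizer.
Variables (z : F) (c : K).
Hypotheses (z_int : val_ge w z 0) (zc_pos : 0 < w (z - iota c)) (zc0 : z - iota c != 0).

Let zc_ge1 : val_ge w (z - iota c) 1.
Proof. by right. Qed.

Lemma val_ge_horner_sub A : val_ge w (hz z A - iota A.[c]) 1.
Proof.
elim/poly_ind: A => [|A e IHA]; first by rewrite rmorph0 horner0 rmorph0 subrr; left.
rewrite rmorphD rmorphM /= horner_morphX horner_morphC hornerMXaddC rmorphD rmorphM /=.
have -> : hz z A * z + iota e - (iota A.[c] * iota c + iota e) =
    (hz z A - iota A.[c]) * z + iota A.[c] * (z - iota c) by ring.
exact: val_geD (val_geMr IHA z_int) (val_geMl (val_ge_iota _) zc_ge1).
Qed.

Lemma val_horner A : hz z A != 0 -> exists k : nat, w (hz z A) = k%:Z * w (z - iota c).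
Proof.
move=> zA0; have A0 : A != 0 by apply: contraNneq zA0 => ->; rewrite rmorph0.
have [k [A1 +] eA] := multiplicity_XsubC A c; rewrite A0 /= => A1c.
have A1c0 : iota A1.[c] != 0 by rewrite fmorph_eq0.
have A1_sub : val_ge w (hz z A1 - iota A1.[c]) (w (iota A1.[c]) + 1).
  by rewrite v_iota // add0r; apply: val_ge_horner_sub.
have [A1z0 wA1z] := vD_eq A1c0 A1_sub; rewrite subrKC v_iota // in A1z0 wA1z.
exists k; rewrite eA rmorphM rmorphXn /= rmorphB /= horner_morphX horner_morphC.
by rewrite vM ?expf_neq0 // wA1z add0r vX.
Qed.

Lemma val_rational_in s : s != 0 -> rational_in z s ->
  exists k : int, w s = k * w (z - iota c).
Proof.
move=> s0 [A [B [B0 es]]]; have A0 : hz z A != 0.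
  by apply: contraNneq s0 => A0; rewrite es A0 mul0r.
have [[kA wA] [kB wB]] := (val_horner A0, val_horner B0).
by exists (kA%:Z - kB%:Z); rewrite es vM ?invr_neq0 // vV // wA wB mulrBl.
Qed.

Lemma val_approximable f : f != 0 -> approximable z f ->
  exists k : int, w f = k * w (z - iota c).
Proof.
move=> f0 zf; have [s [zs fs]] := zf (absz (w f)).+1.
have fs' : val_ge w (- (f - s)) (w f + 1).
  by apply/val_geN/(val_ge_le fs); rewrite -addn1 PoszD; lia.
have [s0 ws] := vD_eq f0 fs'; rewrite opprB subrKC in s0 ws.
by rewrite -ws; apply: val_rational_in.
Qed.

Lemma approximable_uniformizer :
  (forall g, exists f1 f2, [/\ approximable z f1, approximable z f2, f2 != 0 & g = f1 / f2]) ->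
  w (z - iota c) = 1.
Proof.
move=> quot; have [_ _ _ [t [t0 wt]]] := w_place.
have [f1 [f2 [zf1 zf2 f20 et]]] := quot t.
have f10 : f1 != 0 by apply: contraNneq t0 => f10; rewrite et f10 mul0r.
have [[k1 wf1] [k2 wf2]] := (val_approximable f10 zf1, val_approximable f20 zf2).
move: wt; rewrite et vM ?invr_neq0 // vV // wf1 wf2 -mulrBl.
have := zc_pos; move: (w (z - iota c)) (k1 - k2) => d k d0 dk.
by have [k0|k0] := lerP k 0; nia.
Qed.

End Uniformizer.

Lemma Epow_int k X Y : val_ge w X 0 -> val_ge w Y 0 -> val_ge w (Epow k X Y) 0.
Proof.
move=> X0 Y0; apply: val_geMl; first exact: val_geX0.
case: (k %% 3)%N => [|[|j]].
- exact: val_geD Y0 val_ge1.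
- exact: val_geD X0 Y0.
- exact: val_geB (val_geX0 2 Y0) X0.
Qed.

Lemma Epow_sub k X1 Y1 X2 Y2 N : val_ge w X1 0 -> val_ge w Y1 0 -> val_ge w X2 0 ->
  val_ge w Y2 0 -> val_ge w (X1 - X2) N -> val_ge w (Y1 - Y2) N ->
  val_ge w (Epow k X1 Y1 - Epow k X2 Y2) N.
Proof.
move=> X10 Y10 X20 Y20 XN YN; apply: val_ge_subM; first exact: val_geX0.
- by case: (k %% 3)%N => [|[|j]]; [apply: val_geD Y20 val_ge1 | apply: val_geD X20 Y20 |
    apply: val_geB (val_geX0 2 Y20) X20].
- exact: val_ge_subX.
case: (k %% 3)%N => [|[|j]].
- by rewrite opprD addrACA subrr addr0.
- by rewrite opprD addrACA; apply: val_geD.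
have -> : Y1 ^+ 2 - X1 - (Y2 ^+ 2 - X2) = (Y1 ^+ 2 - Y2 ^+ 2) - (X1 - X2) by ring.
by apply: val_geB => //; apply: val_ge_subX.
Qed.

Lemma Epow_pole k X Y : val_ge w X (-3) -> val_ge w Y (-2) ->
  val_ge w (Epow k X Y) (- (k%:Z + 2)).
Proof.
move=> X3 Y2; rewrite /Epow; have Xj := val_geX (k %/ 3) X3.
have := divn_eq k 3; case: (k %% 3)%N (ltn_pmod k (isT : 0 < 3)%N) => [|[|[|l]]] //= _ ek.
- apply: val_ge_le (val_geM Xj (val_geD Y2 (val_ge_le val_ge1 _))) _ => //; lia.
- apply: val_ge_le (val_geM Xj (val_geD X3 (val_ge_le Y2 _))) _ => //; lia.
apply: val_ge_le (val_geM Xj (val_geB (val_geX 2 Y2) (val_ge_le X3 _))) _ => //; lia.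
Qed.

Section Gfun.
Variables (N : nat) (u : F).
Hypothesis u_int : val_ge w u 0.

Let coef_int k : val_ge w ((- u) ^+ (N - k) *+ 'C(N, k)) 0.
Proof. exact/val_geMn/val_geX0/val_geN. Qed.

Lemma gfun_int X Y : val_ge w X 0 -> val_ge w Y 0 -> val_ge w (gfun N u X Y) 0.
Proof. by move=> X0 Y0; apply: val_ge_sum => k _; apply/val_geMl/Epow_int. Qed.

Lemma gfun_sub X1 Y1 X2 Y2 M : val_ge w X1 0 -> val_ge w Y1 0 -> val_ge w X2 0 ->
  val_ge w Y2 0 -> val_ge w (X1 - X2) M -> val_ge w (Y1 - Y2) M ->
  val_ge w (gfun N u X1 Y1 - gfun N u X2 Y2) M.
Proof.
move=> X10 Y10 X20 Y20 XM YM; rewrite -sumrB; apply: val_ge_sum => k _.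
by rewrite -mulrBr; apply/val_geMl/Epow_sub.
Qed.

Lemma gfun_pole X Y : val_ge w X (-3) -> val_ge w Y (-2) ->
  val_ge w (gfun N u X Y) (- (N%:Z + 2)).
Proof.
move=> X3 Y2; apply: val_ge_sum => k _; apply: val_geMl (coef_int k) _.
by apply: val_ge_le (Epow_pole _ X3 Y2) _; have := ltn_ord k; lia.
Qed.

End Gfun.

End Place.

Lemma val_ge_root_near (K : closedFieldType) (F : fieldType) (iota : {rmorphism K -> F})
    (w : F -> int) (P : {poly K}) (z : F) :
  is_place iota w -> P != 0 -> val_ge w z 0 -> val_ge w ((map_poly iota P).[z]) 1 ->
  exists c, val_ge w (z - iota c) 1.
Proof.
move=> w_place P0 z_int; have [r ->] := closed_field_poly_normal P.
rewrite map_polyZ hornerZ rmorph_prod horner_prod /=.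
under eq_bigr do rewrite map_polyXsubC hornerXsubC.
have lc0 : iota (lead_coef P) != 0 by rewrite fmorph_eq0 lead_coef_eq0.
move=> /(val_geMl w_place (val_ge_iota w_place (lead_coef P)^-1)).
rewrite mulrA -rmorphM mulVf ?lead_coef_eq0 // rmorph1 mul1r -(big_map _ predT id).
case/(val_ge_prod1 w_place) => [f /mapP[c _ ->]|f /mapP[c _ ->]]; last by exists c.
by apply: (val_geB w_place) => //; apply: val_ge_iota.
Qed.

Lemma eval2_ind (K F : fieldType) (iota : {rmorphism K -> F}) (x y : F) (Q : F -> Prop) :
  Q 0 -> (forall c, Q (iota c)) -> (forall f g, Q f -> Q g -> Q (f + g)) ->
  (forall f, Q f -> Q (f * x)) -> (forall f, Q f -> Q (f * y)) ->
  forall A, Q (eval2 iota x y A).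
Proof.
move=> Q0 Qiota QD Qx Qy; have Qx_poly (c : {poly K}) : Q (horner_morph (iota_comm iota x) c).
  elim/poly_ind: c => [|c e IHc]; first by rewrite rmorph0.
  by rewrite rmorphD rmorphM /= horner_morphX horner_morphC; apply/QD/Qiota/Qx.
elim/poly_ind => [|A c IHA]; first by rewrite /eval2 map_poly0 horner0.
rewrite /eval2 -[map_poly _ _]/(map_poly (horner_morph (iota_comm iota x)) (A * 'X + c%:P)).
rewrite rmorphD rmorphM /= map_polyX map_polyC /= hornerMXaddC.
exact: QD (Qy _ IHA) (Qx_poly c).
Qed.

(** * Places of the curve *)

Section Curve.
Variables (K : closedFieldType) (F : fieldType) (iota : {rmorphism K -> F}).
Variables (x y : F) (p n m : nat).
Hypotheses (pK : p \in [pchar K]) (m3 : (3 * m)%N = (p ^ n).+1).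
Hypothesis Fxy : curve_function_field iota x y (p ^ n) m.

Local Notation q := (p ^ n)%N.

Lemma pchar_F : p \in [pchar F].
Proof. exact: rmorph_pchar pK. Qed.

Lemma q_gt1 : (1 < q)%N.
Proof.
have q0 : (0 < q)%N by rewrite expn_gt0 prime_gt0 ?(pcharf_prime pK).
by have := m3; lia.
Qed.

Lemma m_gt0 : (0 < m)%N.
Proof. by have := q_gt1; lia. Qed.

Lemma pchar_ndvd_q1 : ~~ (p %| q.+1)%N.
Proof.
have p_pr := pcharf_prime pK; have n0 : (0 < n)%N by case: n q_gt1 => //; rewrite expn0.
rewrite -addn1 dvdn_addr ?dvdn_exp // dvdn1.
by apply: contraTneq (prime_gt1 p_pr) => ->.
Qed.

Lemma three_neq0 : (3%:R : K) != 0.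
Proof. by rewrite -(dvdn_pcharf pK); apply: contra pchar_ndvd_q1; rewrite -m3 => /dvdn_mulr. Qed.

Lemma m_neq0 : (m%:R : K) != 0.
Proof. by rewrite -(dvdn_pcharf pK); apply: contra pchar_ndvd_q1; rewrite -m3 => /dvdn_mull. Qed.

Lemma x_transcendental P : P != 0 -> (map_poly iota P).[x] != 0.
Proof. by case: Fxy => + _ _; apply. Qed.

Lemma x_sub_iota_neq0 c : x - iota c != 0.
Proof.
by have := @x_transcendental ('X - c%:P); rewrite map_polyXsubC hornerXsubC polyXsubC_eq0; apply.
Qed.

Lemma x_neq0 : x != 0.
Proof. by have := @x_transcendental 'X; rewrite map_polyX hornerX polyX_eq0; apply. Qed.

Lemma xm_sum_neq0 : x ^+ (2 * m) + x ^+ m != 0.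
Proof.
have P0 : 'X^(2 * m) + 'X^m != 0 :> {poly K}.
  by rewrite -size_poly_eq0 size_polyDl ?size_polyXn //; have := m_gt0; lia.
by have := x_transcendental P0; rewrite rmorphD /= !map_polyXn hornerD !hornerXn.
Qed.

Lemma curve_eqn : y ^+ q.+1 = - (x ^+ (2 * m) + x ^+ m).
Proof. by case: Fxy => _ e _; apply/eqP; rewrite -addr_eq0 addrA e. Qed.

Lemma y_neq0 : y != 0.
Proof.
apply: contra_neq xm_sum_neq0 => y0; apply/eqP.
by rewrite -oppr_eq0 -curve_eqn y0 expr0n.
Qed.

Lemma curve_generated g : exists A B, eval2 iota x y B != 0 /\
  g = eval2 iota x y A / eval2 iota x y B.
Proof. by case: Fxy => _ _; apply. Qed.

Lemma val_ge_subXq w f g (k : nat) : is_place iota w -> val_ge w (f - g) k%:Z -> (0 < k)%N ->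
  val_ge w (f ^+ q - g ^+ q) k.+1%:Z.
Proof.
move=> w_place fgk k0; apply: val_ge_le (val_ge_subXp w_place n pchar_F fgk) _.
by rewrite -PoszM lez_nat; have := q_gt1; nia.
Qed.

Lemma val_pole_xy w : is_place iota w -> w x < 0 ->
  exists2 t, 0 < t & w x = -3 * t /\ w y = -2 * t.
Proof.
move=> w_place wx; have x0 := x_neq0; have y0 := y_neq0; have m0 := m_gt0.
have x2m0 : x ^+ (2 * m) != 0 by rewrite expf_neq0.
have xm_small : val_ge w (x ^+ m) (w (x ^+ (2 * m)) + 1).
  by right; rewrite !(vX w_place) // PoszM; nia.
have [_ wsum] := vD_eq w_place x2m0 xm_small.
have wyx : (q.+1)%:Z * w y = (2 * m)%N%:Z * w x.
  by rewrite -!(vX w_place) // curve_eqn (vN w_place) ?wsum // xm_sum_neq0.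
have {}wyx : m%:Z * (3 * w y) = m%:Z * (2 * w x).
  by rewrite !mulrA -!PoszM (mulnC m 3) (mulnC m 2) m3.
have {}wyx : 3 * w y = 2 * w x by apply: mulfI wyx; lia.
by exists (w y - w x); lia.
Qed.

Section AtInfinity.
Variables (w : F -> int) (t : int).
Hypotheses (w_place : is_place iota w) (t_gt0 : 0 < t).
Hypotheses (wx : w x = -3 * t) (wy : w y = -2 * t).

Local Notation X := x^-1.
Local Notation Y := (y / x).
Local Notation U := (Y ^+ 3 * x).

Let X_neq0 : X != 0. Proof. by rewrite invr_eq0 x_neq0. Qed.
Let Y_neq0 : Y != 0. Proof. by rewrite mulf_neq0 ?invr_eq0 ?x_neq0 ?y_neq0. Qed.
Let U_neq0 : U != 0. Proof. by rewrite mulf_neq0 ?expf_neq0 ?x_neq0. Qed.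

Lemma val_X : w X = 3 * t.
Proof. by rewrite (vV w_place) ?x_neq0 // wx; ring. Qed.

Lemma val_Y : w Y = t.
Proof. by rewrite (vM w_place) ?y_neq0 // val_X wy; ring. Qed.

Lemma val_U : w U = 0.
Proof. by rewrite (vM w_place) ?expf_neq0 ?x_neq0 // (vX w_place) // val_Y wx; ring. Qed.

Lemma X_int : val_ge w X 0.
Proof. by right; rewrite val_X; lia. Qed.

Lemma Y_int : val_ge w Y 0.
Proof. by right; rewrite val_Y; lia. Qed.

Lemma U_pow_m : U ^+ m = - (1 + X ^+ m).
Proof.
have x0 := x_neq0; have -> : U = y ^+ 3 / x ^+ 2 by field.
rewrite expr_div_n -!exprM m3 curve_eqn (mulnC 2) exprM exprVn.
have r0 : x ^+ m != 0 by rewrite expf_neq0.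
move: (x ^+ m) r0 => r r0.
by field.
Qed.

Lemma Y_pow_3m : Y ^+ (3 * m) = U ^+ m * X ^+ m.
Proof. by rewrite -exprMn exprM mulfK ?x_neq0. Qed.

(* U^(q+1) = U^(3m) = - (1 + X^m)^3 = - (1 + Y^(3m) / U^m)^3, so U = Phi U. *)
Local Notation inner s := (1 + Y ^+ (3 * m) / s ^+ m).
Local Notation Phi s := (- inner s ^+ 3 / s ^+ q).

Lemma Phi_U : Phi U = U.
Proof.
have inner_U : inner U = - U ^+ m.
  by rewrite Y_pow_3m mulrAC mulfV ?expf_neq0 // mul1r U_pow_m opprK.
rewrite inner_U.
have -> : - (- U ^+ m) ^+ 3 = U ^+ q.+1 by rewrite -m3 mulnC exprM; ring.
by rewrite exprS mulfK ?expf_neq0.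
Qed.

Lemma rational_in_Phi s : rational_in iota Y s -> rational_in iota Y (Phi s).
Proof.
move=> Ys; have YY : rational_in iota Y Y by apply: rational_in_self.
apply: rational_inM; last exact/rational_inV/rational_inX.
apply/rational_inN/rational_inX/rational_inD.
  by rewrite -(rmorph1 iota); apply: rational_in_iota.
by apply: rational_inM; [apply: rational_inX | apply/rational_inV/rational_inX].
Qed.

Lemma inner_int s : s != 0 -> w s = 0 -> val_ge w (inner s) 0.
Proof.
move=> s0 ws; apply: (val_geD w_place (val_ge1 w_place)).
apply: (val_geMl w_place (val_geX0 w_place _ Y_int)).
by apply: (val_ge_inv w_place); rewrite ?expf_neq0 // (vX w_place) // ws mulr0.
Qed.

Lemma val_ge_inner_sub s (k : nat) : s != 0 -> w s = 0 -> val_ge w (U - s) k%:Z ->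
  val_ge w (inner U - inner s) k.+1%:Z.
Proof.
move=> s0 ws Usk; rewrite opprD addrACA subrr add0r -mulrBr -[k.+1]add1n PoszD.
apply: (val_geM w_place).
  by right; rewrite (vX w_place) // val_Y; have := m_gt0; nia.
apply: (val_ge_subV w_place); rewrite ?expf_neq0 ?(vX w_place) ?val_U ?ws ?mulr0 //.
by apply: (val_ge_subX w_place) Usk; right; rewrite ?val_U ?ws.
Qed.

Lemma val_ge_Phi_sub s (k : nat) : s != 0 -> w s = 0 -> val_ge w (U - s) k%:Z -> (0 < k)%N ->
  val_ge w (U - Phi s) k.+1%:Z.
Proof.
move=> s0 ws Usk k0; rewrite -{1}Phi_U.
have -> : Phi U - Phi s = - (inner U ^+ 3 / U ^+ q - inner s ^+ 3 / s ^+ q).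
  by ring.
apply/(val_geN w_place)/(val_ge_subM w_place).
- exact/(val_geX0 w_place)/inner_int/val_U.
- by apply: (val_ge_inv w_place); rewrite ?expf_neq0 // (vX w_place) // ws mulr0.
- have [iU i_s] := (inner_int U_neq0 val_U, inner_int s0 ws).
  exact: (val_ge_subX w_place) iU i_s (val_ge_inner_sub s0 ws Usk).
apply: (val_ge_subV w_place); rewrite ?expf_neq0 ?(vX w_place) ?val_U ?ws ?mulr0 //.
exact: val_ge_subXq.
Qed.

Lemma U_near_const : exists c, val_ge w (U - iota c) 1.
Proof.
apply: (val_ge_root_near w_place (P := 'X^m + 1)).
- by rewrite -size_poly_eq0 size_polyDl ?size_polyXn ?size_poly1 //; have := m_gt0; lia.
- by right; rewrite val_U.
rewrite rmorphD rmorph1 /= map_polyXn hornerD hornerXn hornerC U_pow_m opprD addrAC addNr add0r.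
by apply: (val_geN w_place); right; rewrite (vX w_place) // val_X; have := m_gt0; nia.
Qed.

Lemma approximable_U : approximable iota w Y U.
Proof.
apply: (approximable_iter (Phi := fun s => Phi s)).
  by have [c Uc] := U_near_const; exists (iota c); split=> //; apply: rational_in_iota.
move=> s k Ys Usk k0; have [s0 ws] := vD_eq_unit w_place U_neq0 val_U Usk k0.
by split; [apply: rational_in_Phi | apply: val_ge_Phi_sub].
Qed.

Lemma approximable_X : approximable iota w Y X.
Proof.
have eX : Y ^+ 3 / U = X by rewrite invfM mulrA mulfV ?expf_neq0 // mul1r.
rewrite -[e in approximable _ _ _ e]eX.
apply: (approximableM w_place); first exact: (val_geX0 w_place _ Y_int).
- by apply: (val_ge_inv w_place); rewrite ?val_U.
- exact/(approximableX w_place)/approximable_self/Y_int.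
exact: (approximableV w_place U_neq0 val_U approximable_U).
Qed.

Lemma scaled_eval2_approximable A : exists D, forall E, (D <= E)%N ->
  approximable iota w Y (X ^+ E * eval2 iota x y A) /\ val_ge w (X ^+ E * eval2 iota x y A) 0.
Proof.
have XE_int E : val_ge w (X ^+ E) 0 by apply: (val_geX0 w_place); apply: X_int.
have XE_approx E : approximable iota w Y (X ^+ E).
  exact/(approximableX w_place)/approximable_X/X_int.
pose good f := exists D, forall E, (D <= E)%N ->
  approximable iota w Y (X ^+ E * f) /\ val_ge w (X ^+ E * f) 0.
move: A; apply: (@eval2_ind _ _ iota x y good).
- exists 0%N => E _; rewrite mulr0 -(rmorph0 iota).
  by split; [apply: approximable_iota | apply: val_ge_iota].
- move=> c; have c_int : val_ge w (iota c) 0 by apply: val_ge_iota.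
  exists 0%N => E _; split; last by apply: (val_geMr w_place) c_int.
  apply: (approximableM w_place (XE_int E) c_int (XE_approx E)).
  exact: approximable_iota.
- move=> f g [Df ef] [Dg eg]; exists (maxn Df Dg) => E.
  rewrite geq_max => /andP[/ef[f1 f2] /eg[g1 g2]].
  by rewrite mulrDr; split; [apply: approximableD | apply: (val_geD w_place)].
- move=> f [D ef]; exists D.+1 => -[|E] //= DE.
  by rewrite exprSr -mulrA (mulrCA X) mulVf ?x_neq0 // mulr1; apply: ef.
- move=> f [D ef]; exists D.+1 => -[|E] //= DE; have [f1 f2] := ef E DE.
  have -> : X ^+ E.+1 * (f * y) = X ^+ E * f * Y by rewrite exprSr; ring.
  split.
    by apply: (approximableM w_place) => //; [apply: Y_int | apply: approximable_self].
  by apply: (val_geMr w_place) f2 Y_int.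
Qed.

Lemma t_eq1 : t = 1.
Proof.
rewrite -val_Y -[Y]subr0 -(rmorph0 iota).
apply: (approximable_uniformizer w_place); rewrite ?rmorph0 ?subr0 ?val_Y //.
  exact: Y_int.
move=> g; have [A [B [B0 ->]]] := curve_generated g.
have [DA eA] := scaled_eval2_approximable A; have [DB eB] := scaled_eval2_approximable B.
have [[A1 _] [B1 _]] := (eA _ (leq_maxl DA DB), eB _ (leq_maxr DA DB)).
exists (X ^+ maxn DA DB * eval2 iota x y A), (X ^+ maxn DA DB * eval2 iota x y B).
by split=> //; [rewrite mulf_neq0 ?expf_neq0 | rewrite invfM mulrACA mulfV ?expf_neq0 ?mul1r].
Qed.

End AtInfinity.

Lemma val_at_infinity w : is_place iota w -> w x < 0 -> w x = -3 /\ w y = -2.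
Proof.
move=> w_place /(val_pole_xy w_place) [t t0 [wx wy]].
by rewrite wx wy (t_eq1 w_place t0 wx wy).
Qed.

Lemma y_int_of_x_int w : is_place iota w -> val_ge w x 0 -> val_ge w y 0.
Proof.
move=> w_place x_int; right.
have := val_geP xm_sum_neq0 (val_geD w_place (val_geX0 w_place _ x_int) (val_geX0 w_place _ x_int)).
by rewrite -(vN w_place) -?curve_eqn ?xm_sum_neq0 // (vX w_place) ?y_neq0 // pmulr_rge0.
Qed.

Lemma gfun_in_L u c d N :
  in_L_kDinf iota x (N + 2) (gfun N (iota u) (x * iota c) (iota d * y)).
Proof.
set g := gfun _ _ _ _; have [->|g0] := eqVneq g 0; [by left | right=> w w_place].
have u_int : val_ge w (iota u) 0 by apply: val_ge_iota.
have [c_int d_int] : val_ge w (iota c) 0 /\ val_ge w (iota d) 0 by split; apply: val_ge_iota.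
case: ifP => wx.
  have [wx3 wy2] := val_at_infinity w_place wx.
  have X3 : val_ge w (x * iota c) (-3) by apply: (val_geMr w_place) c_int; right; rewrite wx3.
  have Y2 : val_ge w (iota d * y) (-2) by apply: (val_geMl w_place d_int); right; rewrite wy2.
  by rewrite PoszD; apply: val_geP g0 (gfun_pole w_place N u_int X3 Y2).
have x_int : val_ge w x 0 by right; rewrite leNgt wx.
have y_int := y_int_of_x_int w_place x_int.
apply: val_geP g0 (gfun_int w_place N u_int _ _).
  exact: (val_geMr w_place) x_int c_int.
exact: (val_geMl w_place) d_int y_int.
Qed.

Section AtPoint.
Variables (w : F -> int) (a b : K).
Hypotheses (w_place : is_place iota w) (a0 : a != 0) (am1 : 1 + a ^+ m != 0).
Hypotheses (wxa : 0 < w (x - iota a)) (wyb : 0 < w (y - iota b)).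

Let near_int z c : 0 < w (z - iota c) -> val_ge w z 0.
Proof.
move=> zc; rewrite -(subrK (iota c) z); apply: (val_geD w_place); first by right; apply: ltW.
exact: val_ge_iota.
Qed.

Lemma x_int : val_ge w x 0. Proof. exact: near_int wxa. Qed.
Lemma y_int : val_ge w y 0. Proof. exact: near_int wyb. Qed.

Lemma point_on_curve : b ^+ q.+1 + a ^+ (2 * m) + a ^+ m = 0.
Proof.
have sub_pos z c k : 0 < w (z - iota c) -> val_ge w (z ^+ k - iota c ^+ k) 1.
  move=> zc; apply: (val_ge_subX w_place); [exact: near_int zc | exact: val_ge_iota | by right].
apply: (val_ge_iota1 w_place); rewrite !rmorphD !rmorphXn /=.
have -> : iota b ^+ q.+1 + iota a ^+ (2 * m) + iota a ^+ m =
    - ((y ^+ q.+1 - iota b ^+ q.+1) + (x ^+ (2 * m) - iota a ^+ (2 * m)) + (x ^+ m - iota a ^+ m)).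
  by rewrite curve_eqn; ring.
apply/(val_geN w_place); apply: (val_geD w_place); first apply: (val_geD w_place).
all: by apply: sub_pos.
Qed.

Lemma b_neq0 : b != 0.
Proof.
apply: contraNneq am1 => b0; have am0 : a ^+ m != 0 by rewrite expf_neq0.
have := point_on_curve; rewrite b0 expr0n /= add0r mulnC exprM => curve_a.
by apply/eqP/(mulfI am0); rewrite mulr0 -curve_a; ring.
Qed.

Lemma val_y : w y = 0.
Proof.
have ib0 : iota b != 0 by rewrite fmorph_eq0 b_neq0.
have wb : w (iota b) = 0 by rewrite (v_iota w_place) ?b_neq0.
have yb : val_ge w (y - iota b) (w (iota b) + 1) by rewrite wb add0r; right.
by have [_] := vD_eq w_place ib0 yb; rewrite subrKC wb.
Qed.

Local Notation Psi s := (- (x ^+ (2 * m) + x ^+ m) / s ^+ q).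

Lemma Psi_y : Psi y = y.
Proof. by rewrite -curve_eqn exprS mulfK ?expf_neq0 ?y_neq0. Qed.

Lemma approximable_y : approximable iota w x y.
Proof.
apply: (approximable_iter (Phi := fun s => Psi s)).
  by exists (iota b); split; [apply: rational_in_iota | right].
move=> s k xs ysk k0; have [s0 ws] := vD_eq_unit w_place y_neq0 val_y ysk k0; split.
  have xx : rational_in iota x x by apply: rational_in_self.
  apply/rational_inM/rational_inV/rational_inX => //.
  by apply/rational_inN/rational_inD; apply: rational_inX.
rewrite -{1}Psi_y -mulrBr; apply: (val_geMl w_place).
  by apply/(val_geN w_place)/(val_geD w_place); apply/(val_geX0 w_place)/x_int.
have [yq0 sq0] : y ^+ q != 0 /\ s ^+ q != 0 by rewrite !expf_neq0 // y_neq0.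
apply: (val_ge_subV w_place yq0 sq0); rewrite ?(vX w_place) ?val_y ?ws ?mulr0 ?y_neq0 //.
exact: val_ge_subXq.
Qed.

Lemma val_x_sub : w (x - iota a) = 1.
Proof.
apply: (approximable_uniformizer w_place x_int wxa (x_sub_iota_neq0 a)) => g.
pose good f := approximable iota w x f /\ val_ge w f 0.
have good_eval2 : forall A, good (eval2 iota x y A).
  apply: (@eval2_ind _ _ iota x y good).
  - by rewrite -(rmorph0 iota); split; [apply: approximable_iota | apply: val_ge_iota].
  - by move=> c; split; [apply: approximable_iota | apply: val_ge_iota].
  - by move=> f h [f1 f2] [h1 h2]; split; [apply: approximableD | apply: (val_geD w_place)].
  - move=> f [f1 f2]; split; last exact: (val_geMr w_place) f2 x_int.
    exact: (approximableM w_place) f2 x_int f1 (approximable_self _ _ _).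
  - move=> f [f1 f2]; split; last exact: (val_geMr w_place) f2 y_int.
    exact: (approximableM w_place) f2 y_int f1 approximable_y.
have [A [B [B0 ->]]] := curve_generated g.
exists (eval2 iota x y A), (eval2 iota x y B).
by split=> //; [case: (good_eval2 A) | case: (good_eval2 B)].
Qed.

Lemma val_xm_sub : x ^+ m - iota (a ^+ m) != 0 /\ w (x ^+ m - iota (a ^+ m)) = 1.
Proof.
by rewrite rmorphXn -val_x_sub; apply: (v_subX w_place x_int wxa (x_sub_iota_neq0 a) a0 m_neq0).
Qed.

Section CubeRoot.
Hypothesis am_cube : a ^+ m ^+ 2 + a ^+ m + 1 = 0.

Local Notation r := (x ^+ m).
Local Notation U := (iota (a ^+ m)).

Lemma val_cubic : r ^+ 2 + r + 1 != 0 /\ w (r ^+ 2 + r + 1) = 1.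
Proof.
have U_cube : U ^+ 2 + U + 1 = 0 by rewrite -rmorphXn -(rmorph1 iota) -!rmorphD am_cube rmorph0.
have -> : r ^+ 2 + r + 1 = (r - U) * (r - U ^+ 2).
  apply/eqP; rewrite -subr_eq0; apply/eqP.
  by rewrite -[RHS](mulr0 (r + 1 - U)) -U_cube; ring.
have uu0 : a ^+ m - a ^+ m ^+ 2 != 0.
  apply: contra_neq three_neq0 => uu.
  by apply/eqP; rewrite -oppr_eq0 -(cube_root_sub_sqr am_cube) uu expr2 mul0r.
have UU0 : U - U ^+ 2 != 0 by rewrite -rmorphXn -rmorphB fmorph_eq0.
have [rU0 wrU] := val_xm_sub.
have wUU : w (U - U ^+ 2) = 0.
  by rewrite -rmorphXn -rmorphB (v_iota w_place).
have rU_small : val_ge w (r - U) (w (U - U ^+ 2) + 1) by rewrite wUU add0r; right; rewrite wrU.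
have [] := vD_eq w_place UU0 rU_small; rewrite addrC subrKA => rU20 wrU2.
by rewrite mulf_neq0 // (vM w_place) // wrU wrU2 wUU addr0.
Qed.

Lemma gfun_near_cubic N :
  val_ge w (gfun N U (x * iota (a ^+ q)) (iota (- b ^+ q) * y) - (r - U) ^+ N * (r ^+ 2 + r + 1))
    q%:Z.
Proof.
have q_small z c : val_ge w (z - iota c) 1 -> val_ge w (z ^+ q - iota c ^+ q) q%:Z.
  by move=> zc; rewrite -[q%:Z]mulr1; apply: (val_ge_subXp w_place n pchar_F).
have r_int : val_ge w r 0 := val_geX0 w_place m x_int.
rewrite -gfun_id; apply: (gfun_sub w_place); first exact: val_ge_iota.
- by apply: (val_geMr w_place x_int); apply: val_ge_iota.
- by apply: (val_geMl w_place) y_int; apply: val_ge_iota.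
- exact (val_geX0 w_place 3 r_int).
- exact (val_geD w_place (val_geX0 w_place 2 r_int) r_int).
- have -> : x * iota (a ^+ q) - r ^+ 3 = - (x * (x ^+ q - iota a ^+ q)).
    by rewrite rmorphXn -exprM mulnC m3 exprS; ring.
  by apply/(val_geN w_place)/(val_geMl w_place x_int)/q_small; right.
have -> : iota (- b ^+ q) * y - (r ^+ 2 + r) = y * (y ^+ q - iota b ^+ q).
  by rewrite -exprM mulnC -curve_eqn rmorphN rmorphXn exprS; ring.
by apply/(val_geMl w_place y_int)/q_small; right.
Qed.

Lemma val_gfun_at_point N : (N.+1 < q)%N ->
  let g := gfun N U (x * iota (a ^+ q)) (iota (- b ^+ q) * y) in
  g != 0 /\ w g = N.+1%:Z.
Proof.
move=> Nq g; have [rU0 wrU] := val_xm_sub; have [c0 wc] := val_cubic.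
have main0 : (r - U) ^+ N * (r ^+ 2 + r + 1) != 0 by rewrite mulf_neq0 ?expf_neq0.
have wmain : w ((r - U) ^+ N * (r ^+ 2 + r + 1)) = N.+1%:Z.
  by rewrite (vM w_place) ?expf_neq0 // (vX w_place) // wrU wc mulr1 -addn1 PoszD.
have g_near : val_ge w (g - (r - U) ^+ N * (r ^+ 2 + r + 1))
    (w ((r - U) ^+ N * (r ^+ 2 + r + 1)) + 1).
  by apply: val_ge_le (gfun_near_cubic N) _; rewrite wmain -PoszD lez_nat addn1.
by have [] := vD_eq w_place main0 g_near; rewrite subrKC wmain.
Qed.

End CubeRoot.

End AtPoint.

End Curve.

Theorem theorem3p10 (K : closedFieldType) (p n : nat) (F : fieldType)
  (iota : {rmorphism K -> F}) (x y : F) (a b : K) (vP : F -> int) (i : nat) :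
  prime p -> p \in [pchar K] -> (0 < n)%N -> ((p ^ n) %% 3 = 2)%N ->
  curve_function_field iota x y (p ^ n) ((p ^ n).+1 %/ 3) ->
  (* P = P_(a,b): a place with x(P) = a, y(P) = b, a <> 0 *)
  a != 0 -> is_place iota vP ->
  0 < vP (x - iota a) -> 0 < vP (y - iota b) ->
  (* alpha(P) = a^m/(1+a^m) is defined and alpha^2 - alpha + 1 = 0 *)
  1 + a ^+ ((p ^ n).+1 %/ 3) != 0 ->
  (a ^+ ((p ^ n).+1 %/ 3) / (1 + a ^+ ((p ^ n).+1 %/ 3))) ^+ 2
    - a ^+ ((p ^ n).+1 %/ 3) / (1 + a ^+ ((p ^ n).+1 %/ 3)) + 1 = 0 ->
  (0 < i)%N -> (i <= (p ^ n).+1 %/ 3 - 2)%N ->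
  exists g : F, in_L_kDinf iota x (3 * i + 3) g /\ g != 0 /\
    vP g = (3 * i + 2)%:Z.
Proof.
move=> _ pK _ q3 Fxy a0 vP_place xa yb am1 alpha i0 im.
set m := ((p ^ n).+1 %/ 3)%N in Fxy am1 alpha im.
have m3 : (3 * m)%N = (p ^ n).+1.
  by rewrite mulnC divnK // /dvdn -addn1 -modnDml q3.
have Nq : ((3 * i + 1).+1 < p ^ n)%N by move: i0 im m3; lia.
have [g0 vg] := val_gfun_at_point pK m3 Fxy vP_place a0 am1 xa yb (alpha_cube am1 alpha) Nq.
exists (gfun (3 * i + 1) (iota (a ^+ m)) (x * iota (a ^+ (p ^ n))) (iota (- b ^+ (p ^ n)) * y)).
have -> : (3 * i + 3 = 3 * i + 1 + 2)%N by rewrite -addnA.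
split; first exact: (gfun_in_L pK m3 Fxy).
by split; [exact: g0 | rewrite vg -addn1 -addnA].
Qed.
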